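(* Let $G=(V,E)$ be a bipartite graph (parallel edges allowed) with capacities $b_v\ge0$, demands $d_{u,e},d_{v,e}\ge0$ and profits $p_e\ge0$ for each edge $e=uv$, such that $d_{v,e}\le b_v$ for all $v$ and $e\in\delta(v)$. Let $M'\subseteq E$ satisfy $\sum_{e\in\delta_{M'}(v)\setminus L(v)}d_{v,e}\le b_v$ for every $v\in V$, where $L(v)$ is a set of the two edges of $\delta_{M'}(v)$ with highest $d_{v,e}$ (or $L(v)=\delta_{M'}(v)$ if $|\delta_{M'}(v)|\le1$). Then one can find $M\subseteq M'$ with $\sum_{e\in\delta_M(v)}d_{v,e}\le b_v$ for all $v\in V$ and $p(M)\ge\frac{p(M')}{7}$.
   Context: $\delta(v)$ is the set of edges incident to $v$, $\delta_{M'}(v)=\delta(v)\cap M'$, $p(M)=\sum_{e\in M}p_e$. *)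

From mathcomp Require Import all_boot all_order all_algebra.
Set Implicit Arguments. Unset Strict Implicit. Unset Printing Implicit Defensive.
Import Order.TTheory GRing.Theory Num.Theory.
Local Open Scope ring_scope.

(* A multigraph on vertex type V with edge type E: edge e has endpoints
   eu e and ev e.  Parallel edges are allowed since E is an arbitrary finType. *)

Definition delta (V E : finType) (eu ev : E -> V) (v : V) : {set E} :=
  [set e | (eu e == v) || (ev e == v)].

Definition deltaM (V E : finType) (eu ev : E -> V) (M : {set E}) (v : V) : {set E} :=
  delta eu ev v :&: M.

Definition bipartite_by (V E : finType) (eu ev : E -> V) (A : {set V}) : Prop :=
  forall e : E, (eu e \in A) && (ev e \notin A).

Definition top_two (V E : finType) (R : realDomainType) (eu ev : E -> V)
    (d : V -> E -> R) (M : {set E}) (v : V) (L : {set E}) : Prop :=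
  [/\ L \subset deltaM eu ev M v,
      #|L| = minn 2 #|deltaM eu ev M v| &
      forall e f, e \in L -> f \in deltaM eu ev M v :\: L -> d v f <= d v e].

Definition profit (E : finType) (R : realDomainType) (p : E -> R) (M : {set E}) : R :=
  \sum_(e in M) p e.

(* Call two edges of M' in conflict if they share an endpoint v at which one
   of them lies in L(v).  A conflict-free subset of M' is feasible: at each v
   it either contains one edge of L(v) and no other edge at v, which fits since
   d_{v,e} <= b_v, or it avoids L(v) and is covered by the slack hypothesis.
   An edge e conflicts only with the at most four edges of L at its endpoints,
   or with edges f such that e itself lies in L at an endpoint of f.  Charging
   each conflict to the edge of L involved, every nonempty set of edges has a
   member with at most 6 conflicts in it, so the conflict graph is greedily
   7-colourable, and the best of the 7 colour classes has profit >= p(M')/7. *)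

From mathcomp Require Import all_boot all_order all_algebra zify.
Set Implicit Arguments. Unset Strict Implicit. Unset Printing Implicit Defensive.
Import Order.TTheory GRing.Theory Num.Theory.

Lemma mem_delta_endpoint (V E : finType) (eu ev : E -> V) v e :
  e \in delta eu ev v -> v = eu e \/ v = ev e.
Proof. by rewrite inE => /orP[] /eqP ->; [left | right]. Qed.

Lemma exists_low_degree (T : finType) (r : rel T) (O : T -> {set T}) (k : nat)
    (S : {set T}) :
  (forall e f, r e f -> (f \in O e) || (e \in O f)) ->
  {in S, forall e, #|O e| <= k} -> S != set0 ->
  exists2 e, e \in S & #|[set f in S | r e f]| <= k.*2.
Proof.
move=> rO Ok S0.
apply/exists_inP/contraT; rewrite negb_exists_in => /forall_inP high.
pose out e f : nat := f \in O e.
have deg_le e : #|[set f in S | r e f]| <= \sum_(f in S) (out e f + out f e).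
  rewrite -sum1_card (eq_bigl [pred f | (f \in S) && r e f]) => [|f];
    last by rewrite inE.
  rewrite big_mkcondr; apply: leq_sum => f _; rewrite /out.
  by case: ifP => // /rO; case: (f \in O e); case: (e \in O f).
have out_le e : e \in S -> \sum_(f in S) out e f <= k.
  move=> eS; apply: leq_trans (Ok e eS).
  have -> : \sum_(f in S) out e f = \sum_(f in S | f \in O e) 1.
    by rewrite big_mkcondr; apply: eq_bigr => f _; rewrite /out; case: (f \in O e).
  by rewrite sum1_card; apply/subset_leq_card/subsetP => f /andP[].
have : \sum_(e in S) (k.*2).+1 <= \sum_(e in S) \sum_(f in S) (out e f + out f e).
  by apply: leq_sum => e eS; apply: leq_trans (deg_le e); rewrite ltnNge high.
rewrite (eq_bigr _ (fun e _ => big_split _ _ _ _ _)) big_split /=.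
rewrite [X in _ <= _ + X]exchange_big /=.
have total_out : \sum_(e in S) \sum_(f in S) out e f <= #|S| * k.
  by rewrite -sum_nat_const; apply: leq_sum.
have : 0 < #|S| by rewrite card_gt0.
rewrite sum_nat_const; lia.
Qed.

Lemma degenerate_coloring (T : finType) (r : rel T) (k : nat) :
  irreflexive r -> symmetric r ->
  (forall S : {set T}, S != set0 ->
     exists2 e, e \in S & #|[set f in S | r e f]| <= k) ->
  exists c : T -> 'I_k.+1, forall e f, r e f -> c e != c f.
Proof.
move=> irr sym degenerate.
suff /(_ #|T| [set: T]) [|c proper] : forall n (S : {set T}), #|S| <= n ->
    exists c : T -> 'I_k.+1, {in S &, forall e f, r e f -> c e != c f}.
- by rewrite cardsT.
- by exists c => e f; apply: proper; rewrite inE.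
elim=> [|n IH] S cardS; have [->|S0] := eqVneq S set0;
  try by exists (fun=> ord0) => e ?; rewrite inE.
  by rewrite leqn0 cards_eq0 (negbTE S0) in cardS.
have [e eS low] := degenerate S S0.
have [|c proper] := IH (S :\ e); first by rewrite (cardsD1 e) eS in cardS.
pose used := c @: [set f in S | r e f].
have [i iF] : exists i, i \notin used.
  apply/existsP; rewrite -negb_forall; apply/negP => /forallP full.
  have : #|'I_k.+1| <= #|used| by apply/subset_leq_card/subsetP => j _; exact: full.
  by rewrite card_ord ltnNge (leq_trans (leq_imset_card _ _) low).
have usedP z : z \in S -> r e z -> c z \in used.
  by move=> zS rez; apply: imset_f; rewrite inE zS.
exists (fun x => if x == e then i else c x) => x y xS yS rxy.
case: (eqVneq x e) => [xe|xe]; case: (eqVneq y e) => [ye|ye].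
- by rewrite xe ye irr in rxy.
- by apply: contraNneq iF => ->; apply: usedP; rewrite // -xe.
- by apply: contraNneq iF => <-; apply: usedP; rewrite // sym -ye.
- by apply: proper; rewrite // !inE ?xe ?ye.
Qed.

Local Open Scope ring_scope.

Lemma ler_sum_subset (R : numDomainType) (T : finType) (A B : {set T})
    (F : T -> R) :
  A \subset B -> {in B :\: A, forall x, 0 <= F x} ->
  \sum_(x in A) F x <= \sum_(x in B) F x.
Proof.
move=> AB F_ge0; rewrite [X in _ <= X](big_setID A) /= (setIidPr AB) lerDl.
by apply: sumr_ge0 => x /F_ge0.
Qed.

Lemma exists_ge_mean (R : realDomainType) n (F : 'I_n.+1 -> R) :
  exists i, \sum_j F j <= F i *+ n.+1.
Proof.
have [i _ Fmax] := @arg_maxP _ R _ ord0 predT F isT.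
exists i; rewrite -[X in _ *+ X]card_ord -sumr_const.
by apply: ler_sum => j _; apply: Fmax.
Qed.

Section ConflictGraph.

Variables (V E : finType) (eu ev : E -> V) (M' : {set E}) (L : V -> {set E}).
Hypothesis L_card : forall v, (#|L v| <= 2)%N.

Definition conflict : rel E := fun e f =>
  (e != f) && [exists v, [&& e \in deltaM eu ev M' v, f \in deltaM eu ev M' v &
                             (e \in L v) || (f \in L v)]].

Lemma conflict_irr : irreflexive conflict.
Proof. by move=> e; rewrite /conflict eqxx. Qed.

Lemma conflict_sym : symmetric conflict.
Proof.
move=> e f; rewrite /conflict eq_sym; congr andb; apply: eq_existsb => v.
by rewrite andbCA orbC.
Qed.

Definition heavy_neighbours e := (L (eu e) :|: L (ev e)) :\ e.

Lemma card_heavy_neighbours e :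
  (#|heavy_neighbours e| <= 4 - (e \in L (eu e) :|: L (ev e)))%N.
Proof.
have := cardsD1 e (L (eu e) :|: L (ev e)); have := cardsU (L (eu e)) (L (ev e)).
by have := L_card (eu e); have := L_card (ev e); rewrite /heavy_neighbours; lia.
Qed.

Lemma mem_heavy_neighbours v e f :
  e \in deltaM eu ev M' v -> f \in L v -> f != e -> f \in heavy_neighbours e.
Proof.
move=> /setIP[/mem_delta_endpoint ev_e _] fL fe.
by rewrite !inE fe; case: ev_e fL => <- ->; rewrite ?orbT.
Qed.

Lemma conflict_heavy e f :
  conflict e f -> (f \in heavy_neighbours e) || (e \in heavy_neighbours f).
Proof.
case/andP=> ef /existsP[v /and3P[eM fM /orP[eL|fL]]].
- by rewrite (mem_heavy_neighbours fM eL ef) orbT.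
- by rewrite (mem_heavy_neighbours eM fL) // eq_sym.
Qed.

Lemma conflict_light e f : e \notin L (eu e) :|: L (ev e) ->
  conflict e f -> f \in heavy_neighbours e.
Proof.
move=> e_light /andP[ef /existsP[v /and3P[eM fM /orP[eL|fL]]]].
  case/setIP: eM e_light => /mem_delta_endpoint[] <- _; by rewrite inE eL ?orbT.
by rewrite (mem_heavy_neighbours eM fL) // eq_sym.
Qed.

Lemma conflict_low_degree (S : {set E}) : S != set0 ->
  exists2 e, e \in S & (#|[set f in S | conflict e f]| <= 6)%N.
Proof.
move=> S0; case: (boolP [exists e in S, e \notin L (eu e) :|: L (ev e)]).
  case/exists_inP=> e eS e_light; exists e => //.
  apply: (@leq_trans #|heavy_neighbours e|).
    apply/subset_leq_card/subsetP=> f; rewrite inE => /andP[_].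
    exact: conflict_light.
  by apply: leq_trans (card_heavy_neighbours e) _; rewrite (negbTE e_light).
rewrite negb_exists_in => /forall_inP all_heavy.
apply: (@exists_low_degree _ _ _ 3 _ conflict_heavy _ S0) => e /all_heavy.
by rewrite negbK => e_heavy; have := card_heavy_neighbours e; rewrite e_heavy.
Qed.

Variables (R : realDomainType) (b : V -> R) (d : V -> E -> R).
Hypothesis d_ge0 : forall v e, e \in delta eu ev v -> 0 <= d v e.
Hypothesis d_le_b : forall v e, e \in delta eu ev v -> d v e <= b v.
Hypothesis L_slack : forall v, \sum_(e in deltaM eu ev M' v :\: L v) d v e <= b v.

Lemma conflict_free_feasible (C : {set E}) :
  C \subset M' -> {in C &, forall e f, ~~ conflict e f} ->
  forall v, \sum_(e in deltaM eu ev C v) d v e <= b v.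
Proof.
move=> CM' free v.
have CM'v : deltaM eu ev C v \subset deltaM eu ev M' v by apply: setIS.
case: (boolP [exists e in deltaM eu ev C v, e \in L v]).
  case/exists_inP=> e eC eL; have /setIP[e_v e_C] := eC.
  suff -> : deltaM eu ev C v = [set e] by rewrite big_set1 d_le_b.
  apply/eqP; rewrite eq_sym eqEsubset sub1set eC /=.
  apply/subsetP=> f fC; have /setIP[_ f_C] := fC.
  rewrite inE; apply: contraR (free e f e_C f_C) => fe.
  rewrite /conflict eq_sym fe; apply/existsP; exists v.
  by rewrite !(subsetP CM'v) ?eL.
rewrite negb_exists_in => /forall_inP notL.
apply: le_trans (L_slack v); apply: ler_sum_subset.
  by apply/subsetP=> e eC; rewrite inE notL ?(subsetP CM'v).
by move=> e /setDP[/setDP[/setIP[/d_ge0]]].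
Qed.

End ConflictGraph.

Theorem lemma6 (R : realFieldType) (V E : finType) (eu ev : E -> V)
    (A : {set V}) (b : V -> R) (d : V -> E -> R) (p : E -> R) (M' : {set E}) :
  bipartite_by eu ev A ->
  (forall v, 0 <= b v) ->
  (forall v e, e \in delta eu ev v -> 0 <= d v e) ->
  (forall e, 0 <= p e) ->
  (forall v e, e \in delta eu ev v -> d v e <= b v) ->
  (forall v, exists L : {set E}, top_two eu ev d M' v L /\
     \sum_(e in deltaM eu ev M' v :\: L) d v e <= b v) ->
  exists M : {set E}, [/\ M \subset M',
     (forall v, \sum_(e in deltaM eu ev M v) d v e <= b v) &
     profit p M' / 7%:R <= profit p M].
Proof.
move=> _ _ d_ge0 _ d_le_b /fin_all_exists[L L_top].
have L_card v : (#|L v| <= 2)%N by case: (L_top v) => [[_ -> _] _]; apply: geq_minl.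
have L_slack v : \sum_(e in deltaM eu ev M' v :\: L v) d v e <= b v.
  by case: (L_top v).
have [c c_proper] := degenerate_coloring (conflict_irr eu ev M' L)
  (conflict_sym eu ev M' L) (conflict_low_degree eu ev M' L_card).
pose C i := [set e in M' | c e == i].
have C_sub i : C i \subset M' by apply/subsetP=> e; rewrite inE => /andP[].
have C_free i : {in C i &, forall e f, ~~ conflict eu ev M' L e f}.
  move=> e f; rewrite !inE => /andP[_ /eqP ce] /andP[_ /eqP cf].
  by apply: contraL (c_proper e f) _; rewrite ce cf.
have [i Ci_big] := exists_ge_mean (fun i => profit p (C i)).
exists (C i); split; first exact: C_sub.
  exact: (conflict_free_feasible d_ge0 d_le_b L_slack (C_sub i) (C_free i)).
have M'_partition : profit p M' = \sum_j profit p (C j).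
  rewrite /profit (partition_big c predT) //.
  by apply: eq_bigr => j _; apply: eq_bigl => e; rewrite inE.
by rewrite M'_partition ler_pdivrMr ?ltr0n // mulr_natr.
Qed.
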